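(* If $G=(V,E)$ is a word-representable graph with representation number $k>3$, then $G$ is not $3$-complete square-free uniform word-representable.
   Context: A graph $G=(V,E)$ is word-representable if there is a word $w$ over $V$, containing every letter of $V$, such that distinct $x,y\in V$ alternate in $w$ (deleting all other letters yields $xyxy\cdots$ or $yxyx\cdots$) iff $xy\in E$; $w$ represents $G$. A word is $k$-uniform if every letter occurs exactly $k$ times, and uniform if it is $k$-uniform for some $k$. The representation number of a word-representable graph is the least $k$ such that it is represented by a $k$-uniform word. For a word $w$ over $\Sigma$ and $S\subseteq\Sigma$, $w_S$ denotes the word obtained from $w$ by deleting all letters not in $S$. For an integer $p\ge1$, $w$ contains a $p$-complete square if there exists $S\subseteq\Sigma$ such that $w_S$ contains a factor $XX$ with $X\in S^+$ and $|X|\ge p$; otherwise $w$ is $p$-complete square-free. A graph $G$ is $p$-complete square-free uniform word-representable if it is represented by a uniform word $w$ that is $p$-complete square-free. *)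

From mathcomp Require Import all_boot.
Set Implicit Arguments. Unset Strict Implicit. Unset Printing Implicit Defensive.

Section WordRep.
Variable V : finType.

Definition restrict (S : pred V) (w : seq V) : seq V := filter S w.

(* x and y alternate in w: w_{x,y} has no two equal consecutive letters,
   i.e. it is xyxy... or yxyx... *)
Definition alternate (w : seq V) (x y : V) : bool :=
  sorted (fun a b => a != b) (restrict (mem [:: x; y]) w).

Definition represents (E : rel V) (w : seq V) : Prop :=
  (forall x : V, x \in w) /\
  (forall x y : V, x != y -> (alternate w x y <-> E x y)).

Definition word_representable (E : rel V) : Prop := exists w, represents E w.

Definition k_uniform (k : nat) (w : seq V) : Prop :=
  forall x : V, count_mem x w = k.

Definition uniform (w : seq V) : Prop := exists k, k_uniform k w.

Definition representation_number (E : rel V) (k : nat) : Prop :=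
  (exists w, k_uniform k w /\ represents E w) /\
  (forall k' w, k_uniform k' w -> represents E w -> k <= k').

Definition has_complete_square (p : nat) (w : seq V) : Prop :=
  exists (S : pred V) (u X v : seq V),
    restrict S w = u ++ X ++ X ++ v /\ p <= size X /\ all S X.

Definition complete_square_free (p : nat) (w : seq V) : Prop :=
  ~ has_complete_square p w.

Definition csf_uniform_word_representable (p : nat) (E : rel V) : Prop :=
  exists w, uniform w /\ complete_square_free p w /\ represents E w.

End WordRep.

(* If xy is an edge, the letters x and y alternate in w, so w restricted to
   {x, y} is xyxy...; in a k'-uniform representant it has length 2k'.  Since
   k' is at least the representation number, k' >= 4, and the first eight
   letters xyxyxyxy form the 3-complete square (xyxy)(xyxy).  If G has no
   edge, a permutation followed by its reverse is a 2-uniform representant,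
   so the representation number would be at most 2. *)
From mathcomp Require Import all_boot zify.
Set Implicit Arguments. Unset Strict Implicit. Unset Printing Implicit Defensive.

Section TwoLetterWords.
Variables (T : eqType) (x y : T).

Lemma count_mem_pair (s : seq T) : x != y ->
  count (mem [:: x; y]) s = count_mem x s + count_mem y s.
Proof.
move=> nxy; elim: s => //= z s ->; rewrite !inE.
by case: (eqVneq z x) => [->|_]; case: (eqVneq z y) => [e|_] //=;
  rewrite ?(negbTE nxy); lia.
Qed.

Variable s : seq T.
Hypotheses (s_pair : all (mem [:: x; y]) s)
           (s_alt : sorted (fun a b => a != b) s).

Lemma alternating_nth2 x0 i : i.+2 < size s -> nth x0 s i.+2 = nth x0 s i.
Proof.
move=> lt_i; have /(all_nthP x0) in_pair := s_pair; have /(sortedP x0) neq := s_alt.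
have := neq i.+1 lt_i; have := neq i (ltnW lt_i).
have := in_pair _ lt_i; have := in_pair _ (ltnW lt_i); have := in_pair i (ltnW (ltnW lt_i)).
rewrite !inE.
by do 3!case/orP=> /eqP->; rewrite ?eqxx.
Qed.

Lemma alternating_nth_periodic x0 m i : i + m.*2 < size s ->
  nth x0 s (i + m.*2) = nth x0 s i.
Proof.
elim: m => [|m IHm] lt_i; first by rewrite addn0.
rewrite doubleS !addnS alternating_nth2 -?addnS ?IHm //; lia.
Qed.

Lemma alternating_square m : m.*2 + m.*2 <= size s ->
  s = take m.*2 s ++ take m.*2 s ++ drop (m.*2 + m.*2) s.
Proof.
move=> le_size; rewrite catA -[in LHS](cat_take_drop (m.*2 + m.*2) s) takeD.
have periodic := @alternating_nth_periodic x m; move: m.*2 periodic le_size => n periodic le_size.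
congr ((_ ++ _) ++ _); apply: (@eq_from_nth _ x) => [|i lt_i].
  by rewrite !size_take_min size_drop; lia.
rewrite size_take_min in lt_i.
rewrite !nth_take ?nth_drop 1?addnC ?periodic //; lia.
Qed.

End TwoLetterWords.

Section CompleteSquares.
Variable V : finType.

Lemma has_complete_square_leq p q (w : seq V) :
  p <= q -> has_complete_square q w -> has_complete_square p w.
Proof.
by move=> le_pq [S [u [X [v [eq_w [le_qX SX]]]]]]; exists S, u, X, v;
  split; last split; first exact: eq_w; first exact: leq_trans le_qX.
Qed.

Lemma alternate_complete_square (w : seq V) (x y : V) k m :
  x != y -> alternate w x y -> k_uniform k w -> m.*2 <= k ->
  has_complete_square m.*2 w.
Proof.
move=> nxy alt_xy unif_w le_2m; set t := restrict (mem [:: x; y]) w.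
have size_t : size t = k + k by rewrite size_filter count_mem_pair // !unif_w.
have t_pair : all (mem [:: x; y]) t by exact: filter_all.
exists (mem [:: x; y]), [::], (take m.*2 t), (drop (m.*2 + m.*2) t); split.
  by rewrite cat0s -(alternating_square t_pair alt_xy) // size_t; lia.
split; first by rewrite size_take_min size_t; lia.
by apply/allP => z /mem_take; apply: (allP t_pair).
Qed.

Lemma edgeless_2uniform_representant (E : rel V) :
  (forall x y : V, x != y -> ~~ E x y) ->
  exists w, k_uniform 2 w /\ represents E w.
Proof.
move=> noE; exists (enum V ++ rev (enum V)); split.
  by move=> x; rewrite count_cat count_rev count_uniq_mem ?enum_uniq // mem_enum.
split; first by move=> x; rewrite mem_cat mem_enum.
move=> x y nxy; split; last by move=> Exy; move: (noE x y nxy); rewrite Exy.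
rewrite /alternate /restrict filter_cat filter_rev.
set t := filter _ (enum V).
have ut : uniq t by rewrite filter_uniq ?enum_uniq.
have pt : perm_eq t [:: x; y].
  apply: uniq_perm => //=; first by rewrite inE nxy.
  by move=> z; rewrite mem_filter mem_enum andbT.
have := perm_size pt; case: t ut pt => [|a [|b [|c t]]] //= _ _ _.
by rewrite /= eqxx /= andbF.
Qed.

End CompleteSquares.

Theorem mainTheorem14 (V : finType) (E : rel V) (k : nat) :
  symmetric E -> irreflexive E ->
  word_representable E ->
  representation_number E k ->
  3 < k ->
  ~ csf_uniform_word_representable 3 E.
Proof.
move=> _ _ _ [_ k_min] gt3_k [w [[k' unif_w] [csf_w rep_w]]].
have le_kk' := k_min _ _ unif_w rep_w.
have : [exists x, exists y, (x != y) && E x y].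
  apply: contraT => /existsPn noE.
  have [w2 [unif_w2 rep_w2]] : exists w, k_uniform 2 w /\ represents E w.
    apply: edgeless_2uniform_representant => x y nxy; apply/negP => Exy.
    by move: (noE x) => /existsPn/(_ y); rewrite nxy Exy.
  by have := k_min _ _ unif_w2 rep_w2; lia.
case/existsP=> x /existsP[y /andP[nxy Exy]].
apply/csf_w/(@has_complete_square_leq _ 3 2.*2) => //.
by apply: (@alternate_complete_square _ w x y k') => //; [apply/(rep_w.2 _ _ nxy) | lia].
Qed.
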